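(* Let $C$ be a coalgebra over a field $K$, let $S$ be a simple left $C$-comodule and let $E(S)\subseteq C$ be an injective envelope of $S$ contained in $C$ (as a left subcomodule). Then $S^\perp=\{\alpha\in E(S)^*\mid \alpha|_{S}=0\}$ is a maximal and small (superfluous) left $C^*$-submodule of $E(S)^*$, and $E(S)^*$ is generated as a left $C^*$-module by any $f\in E(S)^*$ with $f\notin S^\perp$. Consequently, $E(S)^*$ is an indecomposable left $C^*$-module.
   Context: $C^*=\mathrm{Hom}_K(C,K)$ is the dual algebra with convolution product. A left $C$-comodule $M$ (coaction $m\mapsto m_{-1}\otimes m_0$) is a right $C^*$-module via $m\cdot c^*=c^*(m_{-1})m_0$; its dual $M^*=\mathrm{Hom}_K(M,K)$ is then a left $C^*$-module via $(c^*\cdot\alpha)(m)=\alpha(m\cdot c^* )$. In particular $C$ itself is a left comodule via the comultiplication. *)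

(* Coalgebras and comodules over a field K, with tensors
   represented by finite lists of simple tensors, identified through
   their pairings with products of linear functionals. *)
From HB Require Import structures.
From mathcomp Require Import all_boot all_algebra.
Set Implicit Arguments. Unset Strict Implicit. Unset Printing Implicit Defensive.
Import GRing.Theory.
Local Open Scope ring_scope.

Section CoalgDefs.
Variable K : fieldType.

Definition lin_fun (V : lmodType K) (f : V -> K) : Prop :=
  forall a x y, f (a *: x + y) = a * f x + f y.
Definition lin_map (V W : lmodType K) (g : V -> W) : Prop :=
  forall a x y, g (a *: x + y) = a *: g x + g y.

Definition tev (A B : lmodType K) (f : A -> K) (h : B -> K) (t : seq (A * B)) : K :=
  \sum_(p <- t) f p.1 * h p.2.

Record coalgebra (C : lmodType K) := Coalgebra {
  delta : C -> seq (C * C);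
  eps : C -> K;
  eps_lin : lin_fun eps;
  delta_lin : forall f g : C -> K, lin_fun f -> lin_fun g ->
    forall a x y, tev f g (delta (a *: x + y)) = a * tev f g (delta x) + tev f g (delta y);
  delta_coassoc : forall f g h : C -> K, lin_fun f -> lin_fun g -> lin_fun h ->
    forall x, \sum_(p <- delta x) tev f g (delta p.1) * h p.2
            = \sum_(p <- delta x) f p.1 * tev g h (delta p.2);
  delta_counitl : forall x, \sum_(p <- delta x) eps p.1 *: p.2 = x;
  delta_counitr : forall x, \sum_(p <- delta x) eps p.2 *: p.1 = x }.

Record comodule (C : lmodType K) (cC : coalgebra C) (M : lmodType K) := Comodule {
  coact : M -> seq (C * M);
  coact_lin : forall (f : C -> K) (h : M -> K), lin_fun f -> lin_fun h ->
    forall a x y, tev f h (coact (a *: x + y)) = a * tev f h (coact x) + tev f h (coact y);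
  coact_coassoc : forall (f g : C -> K) (h : M -> K), lin_fun f -> lin_fun g -> lin_fun h ->
    forall x, \sum_(p <- coact x) tev f g (delta cC p.1) * h p.2
            = \sum_(p <- coact x) f p.1 * tev g h (coact p.2);
  coact_counit : forall x, \sum_(p <- coact x) eps cC p.1 *: p.2 = x }.

Definition colinear (C M N : lmodType K) (rM : M -> seq (C * M)) (rN : N -> seq (C * N))
  (g : M -> N) : Prop :=
  lin_map g /\
  forall (f : C -> K) (h : N -> K), lin_fun f -> lin_fun h ->
    forall x, tev f h (rN (g x)) = \sum_(p <- rM x) f p.1 * h (g p.2).

Definition inj_comodule (C : lmodType K) (cC : coalgebra C) (E : lmodType K)
  (cE : comodule cC E) : Prop :=
  forall (M N : lmodType K) (cM : comodule cC M) (cN : comodule cC N)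
         (i : M -> N) (u : M -> E),
    colinear (coact cM) (coact cN) i -> injective i ->
    colinear (coact cM) (coact cE) u ->
    exists v : N -> E, colinear (coact cN) (coact cE) v /\ forall x, v (i x) = u x.

Definition subspace (M : lmodType K) (S : M -> Prop) : Prop :=
  S 0 /\ forall a x y, S x -> S y -> S (a *: x + y).

(* S is a subcomodule: subspace with rho(S) contained in C (x) S *)
Definition subcomod (C : lmodType K) (cC : coalgebra C) (M : lmodType K)
  (cM : comodule cC M) (S : M -> Prop) : Prop :=
  subspace S /\
  forall x, S x -> forall (f : C -> K) (h : M -> K), lin_fun f -> lin_fun h ->
    (forall y, S y -> h y = 0) -> tev f h (coact cM x) = 0.

Definition simple_subcomod (C : lmodType K) (cC : coalgebra C) (M : lmodType K)
  (cM : comodule cC M) (S : M -> Prop) : Prop :=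
  subcomod cM S /\ (exists x, S x /\ x <> 0) /\
  forall T, subcomod cM T -> (forall x, T x -> S x) ->
    (forall x, T x -> x = 0) \/ (forall x, S x -> T x).

Definition essential_in (C : lmodType K) (cC : coalgebra C) (M : lmodType K)
  (cM : comodule cC M) (S : M -> Prop) : Prop :=
  forall T, subcomod cM T -> (exists x, T x /\ x <> 0) ->
    exists x, T x /\ S x /\ x <> 0.

Definition ract (C : lmodType K) (cC : coalgebra C) (M : lmodType K)
  (cM : comodule cC M) (c : C -> K) (m : M) : M :=
  \sum_(p <- coact cM m) c p.1 *: p.2.

Definition lact (C : lmodType K) (cC : coalgebra C) (M : lmodType K)
  (cM : comodule cC M) (c : C -> K) (al : M -> K) : M -> K :=
  fun m => al (ract cM c m).

Definition dual_submod (C : lmodType K) (cC : coalgebra C) (M : lmodType K)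
  (cM : comodule cC M) (P : (M -> K) -> Prop) : Prop :=
  (forall al, P al -> lin_fun al) /\
  P (fun _ => 0) /\
  (forall a al be, P al -> P be -> P (fun m => a * al m + be m)) /\
  (forall c al, lin_fun c -> P al -> P (lact cM c al)).

Definition full_dual (M : lmodType K) (P : (M -> K) -> Prop) : Prop :=
  forall al, lin_fun al -> P al.

Definition zero_dual (M : lmodType K) (P : (M -> K) -> Prop) : Prop :=
  forall al, P al -> forall m, al m = 0.

Definition sum_full (M : lmodType K) (P Q : (M -> K) -> Prop) : Prop :=
  forall al, lin_fun al -> exists be ga, P be /\ Q ga /\ forall m, al m = be m + ga m.

Definition maximal_submod (C : lmodType K) (cC : coalgebra C) (M : lmodType K)
  (cM : comodule cC M) (P : (M -> K) -> Prop) : Prop :=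
  dual_submod cM P /\ ~ full_dual P /\
  forall Q, dual_submod cM Q -> (forall al, P al -> Q al) ->
    (forall al, Q al -> P al) \/ full_dual Q.

Definition small_submod (C : lmodType K) (cC : coalgebra C) (M : lmodType K)
  (cM : comodule cC M) (P : (M -> K) -> Prop) : Prop :=
  dual_submod cM P /\
  forall Q, dual_submod cM Q -> sum_full P Q -> full_dual Q.

Definition generates (C : lmodType K) (cC : coalgebra C) (M : lmodType K)
  (cM : comodule cC M) (f : M -> K) : Prop :=
  forall Q, dual_submod cM Q -> Q f -> full_dual Q.

Definition indecomposable_dual (C : lmodType K) (cC : coalgebra C) (M : lmodType K)
  (cM : comodule cC M) : Prop :=
  (exists al : M -> K, lin_fun al /\ exists m, al m <> 0) /\
  forall P Q, dual_submod cM P -> dual_submod cM Q ->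
    (forall al, P al -> Q al -> forall m, al m = 0) -> sum_full P Q ->
    zero_dual P \/ zero_dual Q.

Definition perp (M : lmodType K) (S : M -> Prop) : (M -> K) -> Prop :=
  fun al => lin_fun al /\ forall m, S m -> al m = 0.

End CoalgDefs.

(* For f in E^* not vanishing on S, the comodule map E -> C, m |-> f(m_0) m_{-1},
   is injective: its kernel is a subcomodule, so by essentiality it would
   otherwise contain a nonzero x in S; x generates the simple comodule S under
   the action of C^*, and f(x . c) = 0 for all c would force f to vanish on S.
   Extending linear functionals along this injection (by Zorn's lemma) writes
   every element of E^* as c . f. So every element outside the proper submodule
   S^perp generates E^*, which makes S^perp maximal and superfluous and E^*
   indecomposable. *)

From HB Require Import structures.
From mathcomp Require Import all_boot all_algebra.
From mathcomp Require Import ring.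
From mathcomp Require Import boolp classical_sets.
Set Implicit Arguments. Unset Strict Implicit. Unset Printing Implicit Defensive.
Import GRing.Theory.
Local Open Scope ring_scope.
Local Open Scope classical_set_scope.

Section LinearFunctionals.
Variables (K : fieldType) (V : lmodType K).
Implicit Types (h : V -> K) (x y : V).

Lemma lin_fun0 h : lin_fun h -> h 0 = 0.
Proof.
move=> Lh; have := Lh 1 0 0; rewrite scale1r addr0 mul1r => h00.
by apply: (addrI (h 0)); rewrite addr0 -h00.
Qed.

Lemma lin_funD h x y : lin_fun h -> h (x + y) = h x + h y.
Proof. by move=> Lh; have := Lh 1 x y; rewrite scale1r mul1r. Qed.

Lemma lin_funZ h a x : lin_fun h -> h (a *: x) = a * h x.
Proof. by move=> Lh; have := Lh a x 0; rewrite !addr0 lin_fun0 // addr0. Qed.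

Lemma lin_funB h x y : lin_fun h -> h (x - y) = h x - h y.
Proof. by move=> Lh; rewrite lin_funD // -scaleN1r lin_funZ // mulN1r. Qed.

Lemma lin_fun_sum h (I : Type) (s : seq I) (F : I -> V) :
  lin_fun h -> h (\sum_(i <- s) F i) = \sum_(i <- s) h (F i).
Proof.
move=> Lh; elim: s => [|i s IHs]; first by rewrite !big_nil lin_fun0.
by rewrite !big_cons lin_funD // IHs.
Qed.

Lemma lin_map0 (W : lmodType K) (g : V -> W) : lin_map g -> g 0 = 0.
Proof.
move=> Lg; have := Lg 1 0 0; rewrite !scale1r addr0 => g00.
by apply: (addrI (g 0)); rewrite addr0 -g00.
Qed.

Lemma lin_map_inj (W : lmodType K) (g : V -> W) :
  lin_map g -> (forall x, g x = 0 -> x = 0) -> injective g.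
Proof.
move=> Lg g0 x y gxy; apply/eqP; rewrite -subr_eq0; apply/eqP/g0.
by rewrite -scaleN1r addrC Lg gxy scaleN1r addNr.
Qed.

End LinearFunctionals.

Section LinearGraphs.
Variables (K : fieldType) (V : lmodType K).
Implicit Types (A G : set (V * K)) (x u : V) (a b : K).

Definition graph_fun A := forall x a b, A (x, a) -> A (x, b) -> a = b.

Definition graph_lin A :=
  forall k x a y b, A (x, a) -> A (y, b) -> A (k *: x + y, k * a + b).

Definition adjoin A x b : set (V * K) :=
  [set p | exists u a k, A (u, a) /\ p.1 = u + k *: x /\ p.2 = a + k * b].

Lemma graph_lin0 A x a : graph_lin A -> A (x, a) -> A (0, 0).
Proof.
by move=> lA Axa; have := lA (-1) _ _ _ _ Axa Axa; rewrite scaleN1r mulN1r !addNr.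
Qed.

Lemma adjoin_sub A x b : A `<=` adjoin A x b.
Proof. by move=> [u a] Aua; exists u, a, 0; rewrite scale0r mul0r !addr0. Qed.

Lemma adjoin_new A x b : A (0, 0) -> adjoin A x b (x, b).
Proof. by move=> A00; exists 0, 0, 1; rewrite scale1r mul1r !add0r. Qed.

Lemma adjoin_lin A x b : graph_lin A -> graph_lin (adjoin A x b).
Proof.
move=> lA k _ _ _ _ [u [a [l [Aua [/= -> ->]]]]] [u' [a' [l' [Aua' [/= -> ->]]]]].
exists (k *: u + u'), (k * a + a'), (k * l + l'); split; first exact: lA.
by rewrite /= scalerDr scalerA scalerDl addrACA; split=> //; ring.
Qed.

Lemma adjoin_fun A x b : graph_fun A -> graph_lin A -> ~ (exists a, A (x, a)) ->
  graph_fun (adjoin A x b).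
Proof.
move=> fA lA Ax z _ _ [u [a [l [Aua [/= e ->]]]]] [u' [a' [l' [Aua' [/= e' ->]]]]].
have [ll'|nll'] := eqVneq l l'.
  rewrite -ll' in e' *; have uu' : u = u' by apply: (addIr (l *: x)); rewrite -e -e'.
  by rewrite uu' in Aua; rewrite (fA _ _ _ Aua Aua').
have dx : (l - l') *: x = u' - u.
  by rewrite scalerBl; apply/eqP; rewrite subr_eq addrAC -e' e [_ - u]addrC addKr.
have := lA (l - l')^-1 _ _ _ _ (lA (-1) _ _ _ _ Aua Aua') (graph_lin0 lA Aua).
rewrite !addr0 scaleN1r [- u + u']addrC -dx scalerK ?subr_eq0 // => Axa.
by case: Ax; eexists; exact: Axa.
Qed.

Lemma graph_extend G : graph_fun G -> graph_lin G -> G (0, 0) ->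
  exists c : V -> K, lin_fun c /\ forall x a, G (x, a) -> c x = a.
Proof.
move=> fG lG G00.
(* the empty graph must be admitted, as the union of the empty chain *)
pose P A := [/\ graph_fun A, graph_lin A & A !=set0 -> G `<=` A].
have [A [[fA lA GA] maxA]] : exists A, P A /\ forall B, A `<` B -> ~ P B.
  apply: Zorn_bigcup => F FP Ftot.
  have common X Y p q : F X -> F Y -> X p -> Y q -> exists2 Z, F Z & Z p /\ Z q.
    move=> FX FY Xp Yq.
    by case: (Ftot _ _ FX FY) => [/(_ p Xp)|/(_ q Yq)]; [exists Y|exists X].
  split.
  - move=> x a b [X FX Xa] [Y FY Yb]; have [Z FZ [Za Zb]] := common _ _ _ _ FX FY Xa Yb.
    by have [fZ _ _] := FP _ FZ; exact: fZ Za Zb.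
  - move=> k x a y b [X FX Xa] [Y FY Yb]; have [Z FZ [Za Zb]] := common _ _ _ _ FX FY Xa Yb.
    by have [_ lZ _] := FP _ FZ; exists Z => //; exact: lZ.
  - move=> [p [X FX Xp]] q Gq; have [_ _ GX] := FP _ FX.
    by exists X => //; exact: GX (ex_intro _ p Xp) q Gq.
have A00 : A (0, 0).
  apply: contrapT => nA00; apply: (maxA G); last by split=> // _.
  split; last by move=> /(_ (0, 0) G00).
  by move=> [x a] Axa; case: nA00; exact: graph_lin0 lA Axa.
have {}GA : G `<=` A := GA (ex_intro _ _ A00).
have total x : exists a, A (x, a).
  apply: contrapT => nx; apply: (maxA (adjoin A x 0)).
    split; first exact: adjoin_sub.
    by move=> /(_ _ (adjoin_new x 0 A00)) Ax0; case: nx; exists 0.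
  split; [exact: adjoin_fun | exact: adjoin_lin | move=> _].
  exact: subset_trans GA (@adjoin_sub A x 0).
have [c Ac] := choice total.
exists c; split; last by move=> x a /GA; exact: fA (Ac x).
by move=> k x y; apply: fA (Ac _) _; exact: lA.
Qed.

End LinearGraphs.

Section Extension.
Variables (K : fieldType) (V : lmodType K).

Lemma lin_fun_vanishing (S : V -> Prop) y : subspace S -> ~ S y ->
  exists h : V -> K, lin_fun h /\ (forall s, S s -> h s = 0) /\ h y = 1.
Proof.
move=> [S0 SD] Sy; pose A : set (V * K) := [set p | S p.1 /\ p.2 = 0].
have lA : graph_lin A.
  by move=> k x a z b [Sx /= ->] [Sz /= ->]; split; [exact: SD | rewrite /= mulr0 addr0].
have [||| h [Lh Ah]] := @graph_extend _ _ (adjoin A y 1).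
- by apply: adjoin_fun => // [x a b [_ /= ->] [_ /= ->] | [a [/Sy]]].
- exact: adjoin_lin.
- exact: adjoin_sub.
exists h; split=> //; split; last exact/Ah/adjoin_new.
by move=> s Ss; apply/Ah/adjoin_sub.
Qed.

Lemma lin_fun_separate (x y : V) :
  (forall h : V -> K, lin_fun h -> h x = h y) -> x = y.
Proof.
move=> hxy; apply: contrapT => nxy.
have [||h [Lh [_ h1]]] := @lin_fun_vanishing (eq 0) (x - y).
- by split=> // a _ _ <- <-; rewrite scaler0 addr0.
- by move/esym/eqP; rewrite subr_eq0 => /eqP /nxy.
by move/eqP: h1; rewrite lin_funB // hxy // subrr eq_sym oner_eq0.
Qed.

Lemma lin_fun_factor (W : lmodType K) (g : V -> W) (al : V -> K) :
  lin_map g -> injective g -> lin_fun al ->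
  exists c : W -> K, lin_fun c /\ forall v, c (g v) = al v.
Proof.
move=> Lg g_inj Lal; pose G : set (W * K) := [set p | exists v, p = (g v, al v)].
have [||| c [Lc Gc]] := @graph_extend _ _ G.
- by move=> _ _ _ [v [-> ->]] [v' [/g_inj <- ->]].
- move=> k _ _ _ _ [v [-> ->]] [v' [-> ->]].
  by exists (k *: v + v'); rewrite Lg Lal.
- by exists 0; rewrite lin_map0 // lin_fun0.
by exists c; split=> // v; apply: Gc; exists v.
Qed.

End Extension.

Section Comodules.
Variables (K : fieldType) (C : lmodType K) (cC : coalgebra C).
Variables (M : lmodType K) (cM : comodule cC M).
Implicit Types (c : C -> K) (m x : M).

Definition conv (c c' : C -> K) : C -> K := fun v => tev c c' (delta cC v).

Definition cyclic_comod x : set M := [set y | exists2 c, lin_fun c & y = ract cM c x].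

Definition contract (f : M -> K) m : C := \sum_(p <- coact cM m) f p.2 *: p.1.

Lemma lin_fun_ract (h : M -> K) c m :
  lin_fun h -> h (ract cM c m) = tev c h (coact cM m).
Proof. by move=> Lh; rewrite lin_fun_sum //; apply: eq_bigr => p _; rewrite lin_funZ. Qed.

Lemma ract_conv (h : M -> K) c c' m : lin_fun c -> lin_fun c' -> lin_fun h ->
  h (ract cM c' (ract cM c m)) = h (ract cM (conv c c') m).
Proof.
move=> Lc Lc' Lh; rewrite !lin_fun_ract // (lin_fun_sum _ _ (coact_lin cM Lc' Lh)).
symmetry; apply: etrans (coact_coassoc cM Lc Lc' Lh m) _; apply: eq_bigr => p _.
by rewrite (lin_funZ _ _ (coact_lin cM Lc' Lh)).
Qed.

Lemma ract_eps m : ract cM (eps cC) m = m.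
Proof. exact: coact_counit. Qed.

Lemma ract0l m : ract cM (fun _ => 0) m = 0.
Proof. by rewrite /ract big1 // => p _; rewrite scale0r. Qed.

Lemma ractDl a c c' m :
  ract cM (fun v => a * c v + c' v) m = a *: ract cM c m + ract cM c' m.
Proof.
rewrite /ract scaler_sumr -big_split; apply: eq_bigr => p _.
by rewrite scalerA scalerDl.
Qed.

Lemma subcomod_ract (S : M -> Prop) c x : subcomod cM S -> S x -> lin_fun c ->
  S (ract cM c x).
Proof.
move=> [subS SC] Sx Lc; apply: contrapT => nS.
have [h [Lh [hS h1]]] := lin_fun_vanishing subS nS.
by move/eqP: h1; rewrite lin_fun_ract // SC // eq_sym oner_eq0.
Qed.

Lemma subcomod_cyclic x : subcomod cM (cyclic_comod x).
Proof.
split; first split.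
- by exists (fun _ => 0); rewrite ?ract0l // => a u v; rewrite mulr0 addr0.
- move=> a _ _ [c Lc ->] [c' Lc' ->]; exists (fun v => a * c v + c' v); last by rewrite ractDl.
  by move=> b u v; rewrite Lc Lc'; ring.
move=> _ [c Lc ->] f h Lf Lh hC; rewrite -lin_fun_ract // ract_conv // hC //.
by exists (conv c f) => //; exact: delta_lin.
Qed.

Lemma simple_subcomod_cyclic (S : M -> Prop) x s :
  simple_subcomod cM S -> S x -> x <> 0 -> S s -> exists2 c, lin_fun c & s = ract cM c x.
Proof.
move=> [subS [_ simS]] Sx nx Ss.
have cycS : cyclic_comod x `<=` S by move=> _ [c Lc ->]; exact: subcomod_ract.
have [x0|] := simS _ (subcomod_cyclic x) cycS; last exact.
by case: nx; apply: x0; exists (eps cC); rewrite ?ract_eps //; exact: eps_lin.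
Qed.

Lemma lin_fun_contract (f : M -> K) c m : lin_fun f -> lin_fun c ->
  c (contract f m) = f (ract cM c m).
Proof.
move=> Lf Lc; rewrite lin_fun_sum // lin_fun_ract //; apply: eq_bigr => p _.
by rewrite lin_funZ // mulrC.
Qed.

Lemma contract_lin (f : M -> K) : lin_fun f -> lin_map (contract f).
Proof.
move=> Lf a x y; apply: lin_fun_separate => c Lc.
by rewrite Lc !lin_fun_contract // !lin_fun_ract // coact_lin.
Qed.

Lemma subcomod_ker_contract (f : M -> K) : lin_fun f ->
  subcomod cM [set m | contract f m = 0].
Proof.
move=> Lf; split; first split.
- exact: lin_map0 (contract_lin Lf).
- by move=> a x y /= x0 y0; rewrite contract_lin // x0 y0 scaler0 addr0.
move=> m /= m0 g h Lg Lh hK; rewrite -lin_fun_ract //; apply: hK.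
apply: lin_fun_separate => c Lc /=; have Lgc : lin_fun (conv g c) by exact: delta_lin.
by rewrite lin_fun_contract // ract_conv // -lin_fun_contract ?m0 ?lin_fun0.
Qed.

Lemma contract_inj (S : M -> Prop) (f : M -> K) s :
  simple_subcomod cM S -> essential_in cM S -> lin_fun f -> S s -> f s <> 0 ->
  injective (contract f).
Proof.
move=> simS essS Lf Ss fs; apply: lin_map_inj (contract_lin Lf) _ => m m0.
apply: contrapT => nm.
have [x [/= x0 [Sx nx]]] := essS _ (subcomod_ker_contract Lf) (ex_intro _ m (conj m0 nm)).
have [c Lc sc] := simple_subcomod_cyclic simS Sx nx Ss.
by apply: fs; rewrite sc -lin_fun_contract // x0 lin_fun0.
Qed.

Lemma lact_onto (S : M -> Prop) (f al : M -> K) s :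
  simple_subcomod cM S -> essential_in cM S -> lin_fun f -> S s -> f s <> 0 ->
  lin_fun al -> exists2 c, lin_fun c & forall m, lact cM c f m = al m.
Proof.
move=> simS essS Lf Ss fs Lal.
have [c [Lc cal]] := lin_fun_factor (contract_lin Lf) (contract_inj simS essS Lf Ss fs) Lal.
by exists c => // m; rewrite /lact -lin_fun_contract.
Qed.

End Comodules.

Section DualModules.
Variables (K : fieldType) (C : lmodType K) (cC : coalgebra C).
Variables (M : lmodType K) (cM : comodule cC M).

Lemma lact_lin c (al : M -> K) : lin_fun c -> lin_fun al -> lin_fun (lact cM c al).
Proof. by move=> Lc Lal a x y; rewrite /lact !lin_fun_ract // coact_lin. Qed.

Lemma perp_dual_submod (S : M -> Prop) : subcomod cM S -> dual_submod cM (perp S).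
Proof.
move=> [_ SC]; split; [by move=> al [] | split; [|split]].
- by split=> [a x y|m _]; rewrite ?mulr0 ?addr0.
- move=> a al be [Lal alS] [Lbe beS]; split=> [k x y|m Sm].
    by rewrite Lal Lbe; ring.
  by rewrite alS // beS // mulr0 addr0.
- move=> c al Lc [Lal alS]; split; first exact: lact_lin.
  by move=> m Sm; rewrite /lact lin_fun_ract // SC.
Qed.

Lemma perp_proper (S : M -> Prop) x : S x -> x <> 0 -> ~ full_dual (perp S).
Proof.
move=> Sx nx full; apply: nx; apply: lin_fun_separate => h Lh.
by rewrite lin_fun0 // (full h Lh).2.
Qed.

Lemma not_perp_generates (S : M -> Prop) (f : M -> K) :
  simple_subcomod cM S -> essential_in cM S -> lin_fun f -> ~ perp S f ->
  generates cM f.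
Proof.
move=> simS essS Lf nf Q [_ [_ [_ QC]]] Qf al Lal.
have [s Ss fs] : exists2 s, S s & f s <> 0.
  apply: contrapT => nfs; apply: nf; split=> // m Sm.
  by apply: contrapT => fm; apply: nfs; exists m.
have [c Lc cal] := lact_onto simS essS Lf Ss fs Lal.
by rewrite -(funext cal); exact: QC.
Qed.

Lemma dual_submodD (Q : (M -> K) -> Prop) al be :
  dual_submod cM Q -> Q al -> Q be -> Q (fun m => al m + be m).
Proof.
move=> [_ [_ [QD _]]] Qal Qbe.
by have := QD 1 _ _ Qal Qbe; under eq_fun do rewrite mul1r.
Qed.

Section OutsideGenerators.
Variable P : (M -> K) -> Prop.
Hypotheses (P_submod : dual_submod cM P) (P_proper : ~ full_dual P).
Hypothesis P_gen : forall f, lin_fun f -> ~ P f -> generates cM f.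

Lemma outside_witness : exists2 h, lin_fun h & ~ P h.
Proof.
apply: contrapT => nh; apply: P_proper => h Lh.
by apply: contrapT => nPh; apply: nh; exists h.
Qed.

Lemma maximal_submod_gen : maximal_submod cM P.
Proof.
split=> //; split=> // Q Qsub PQ.
have [|/existsNP [al /not_implyP [Qal nal]]] := EM (forall al, Q al -> P al).
  by left.
by right; exact: P_gen (Qsub.1 _ Qal) nal Q Qsub Qal.
Qed.

Lemma small_submod_gen : small_submod cM P.
Proof.
split=> // Q Qsub PQ; have [h Lh nh] := outside_witness.
have [be [ga [Pbe [Qga hE]]]] := PQ h Lh.
apply: (P_gen (Qsub.1 _ Qga)) Qga => // Pga; apply: nh.
by rewrite (funext hE); exact: dual_submodD.
Qed.

Lemma indecomposable_dual_gen : indecomposable_dual cM.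
Proof.
have [h Lh nh] := outside_witness; split.
  exists h; split=> //; apply: contrapT => h0; apply: nh.
  suff -> : h = fun _ => 0 by exact: P_submod.2.1.
  by apply: funext => m; apply: contrapT => hm; apply: h0; exists m.
move=> P1 Q1 P1sub Q1sub disj PQ; have [be [ga [P1be [Q1ga hE]]]] := PQ h Lh.
have [Pbe|nbe] := EM (P be); last first.
  right=> al Q1al m; apply: disj => //.
  exact: P_gen (P1sub.1 _ P1be) nbe P1 P1sub P1be al (Q1sub.1 _ Q1al).
have [Pga|nga] := EM (P ga).
  by case: nh; rewrite (funext hE); exact: dual_submodD.
left=> al P1al m; apply: disj => //.
exact: P_gen (Q1sub.1 _ Q1ga) nga Q1 Q1sub Q1ga al (P1sub.1 _ P1al).
Qed.

End OutsideGenerators.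

End DualModules.

Theorem lemma1p4 (K : fieldType) (C : lmodType K) (cC : coalgebra C)
  (E : lmodType K) (cE : comodule cC E) (iota : E -> C) (S : E -> Prop) :
  colinear (coact cE) (delta cC) iota -> injective iota ->
  simple_subcomod cE S -> inj_comodule cE -> essential_in cE S ->
  maximal_submod cE (perp S) /\ small_submod cE (perp S) /\
  (forall f : E -> K, lin_fun f -> ~ perp S f -> generates cE f) /\
  indecomposable_dual cE.
Proof.
(* only the essentiality of S is used, not the injectivity of E nor iota *)
move=> _ _ simS _ essS.
have [subS [[x [Sx nx]] _]] := simS.
have Psub := perp_dual_submod subS.
have Pproper := perp_proper Sx nx.
have Pgen f : lin_fun f -> ~ perp S f -> generates cE f := not_perp_generates simS essS.
split; first exact: maximal_submod_gen.
split; first exact: small_submod_gen.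
by split=> //; exact: indecomposable_dual_gen Pgen.
Qed.
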